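(* For any $n\in\mathbb{N}$, the monoid $\mathrm{rps}_n$ satisfies the identity $(xy)^{n+1}=(xy)^n yx$.
   Context: Let $\mathcal{A}_n=\{1<2<\cdots<n\}$. An rPS tableau is a finite (possibly empty) sequence of nonempty bottom-justified columns of boxes filled with positive integers, such that the entries of each column are weakly decreasing from top to bottom and the bottom entries of the columns form a strictly increasing sequence from left to right. Right insertion of a symbol $a$ into an rPS tableau $B$: if $a$ is strictly greater than every entry of the bottom row, append a new column consisting of $a$ at the right end; otherwise, let $z$ be the leftmost bottom-row entry with $z\geq a$ and put $a$ in a new box at the bottom of the column of $z$ (the previous entries of that column move up one box). For $w=w_1\cdots w_k$, $\mathfrak{R}_r(w)$ is obtained by starting with the empty tableau and right-inserting $w_1,\dots,w_k$ in order. The monoid $\mathrm{rps}_n$ is the quotient of $\mathcal{A}_n^*$ by the congruence $u\equiv v\iff\mathfrak{R}_r(u)=\mathfrak{R}_r(v)$. A monoid $M$ satisfies the identity $u(x,y)=v(x,y)$ if equality holds in $M$ for every substitution of elements of $M$ for the variables $x,y$. *)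

From mathcomp Require Import all_boot.
Set Implicit Arguments. Unset Strict Implicit. Unset Printing Implicit Defensive.

(* rPS tableaux: a tableau is a sequence of columns (left to right); each
   column is a nonempty sequence of entries listed from TOP to BOTTOM, so the
   bottom entry of a column is its last element. *)
Definition column := seq nat.
Definition rps_tableau := seq column.

Definition bottom (c : column) : nat := last 0 c.

Fixpoint rins (B : rps_tableau) (a : nat) : rps_tableau :=
  match B with
  | [::] => [:: [:: a]]
  | c :: B' =>
      if a <= bottom c then rcons c a :: B'
      else c :: rins B' a
  end.

Definition Rr (w : seq nat) : rps_tableau := foldl rins [::] w.

Definition word_over (n : nat) (w : seq nat) : bool :=
  all (fun a => (1 <= a) && (a <= n)) w.

(* Congruence defining rps_n. *)
Definition rps_equiv (u v : seq nat) : Prop := Rr u = Rr v.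

Definition wpow (w : seq nat) (k : nat) : seq nat := flatten (nseq k w).

From mathcomp Require Import all_boot.
Set Implicit Arguments. Unset Strict Implicit.

(* Once every letter of a word w sits in the bottom row of a tableau, right
   insertion of a letter a only stacks a below the column whose bottom entry
   is a, so the bottom row never changes and the result depends only on the
   letter counts of the inserted word: inserting x y or y x gives the same
   tableau.  It thus suffices that (x y)^n already puts every letter of
   w = x y into the bottom row.  A letter that is in the bottom row stays there
   under insertion of any larger letter and of any letter already in the
   bottom row, so by induction the j-th pass of w brings the letter j into the
   bottom row, and n passes suffice for the alphabet {1, ..., n}. *)

Definition bots (B : rps_tableau) : seq nat := map bottom B.

Lemma bottom_rcons c a : bottom (rcons c a) = a.
Proof. by rewrite /bottom last_rcons. Qed.

Lemma bottom_cat_nseq c k : bottom (c ++ nseq k (bottom c)) = bottom c.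
Proof. by rewrite /bottom last_cat; elim: k. Qed.

Lemma bots_rins_sub B a : {subset bots (rins B a) <= a :: bots B}.
Proof.
elim: B => [|c B IH] b //=; case: ifP => _ /=; rewrite !inE ?bottom_rcons.
  by case/orP=> ->; rewrite ?orbT.
by case/orP=> [-> | /IH]; rewrite ?inE ?orbT // => /orP[] ->; rewrite ?orbT.
Qed.

Lemma sorted_bots_rins B a :
  sorted ltn (bots B) -> sorted ltn (bots (rins B a)).
Proof.
elim: B => [|c B IH] //=; rewrite !(path_sortedE ltn_trans) => /andP[cB sB].
case: ifP => ac /=; rewrite (path_sortedE ltn_trans) ?bottom_rcons.
  by rewrite sB andbT; apply: sub_all cB => b; apply: leq_ltn_trans.
rewrite IH // andbT; apply/allP => b /bots_rins_sub; rewrite inE.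
by case/orP=> [/eqP -> | /(allP cB)]; rewrite // ltnNge ac.
Qed.

Lemma sorted_bots_foldl B u :
  sorted ltn (bots B) -> sorted ltn (bots (foldl rins B u)).
Proof. by elim: u B => [|a u IH] B sB //=; apply/IH/sorted_bots_rins. Qed.

Lemma sorted_bots_Rr w : sorted ltn (bots (Rr w)).
Proof. exact: sorted_bots_foldl. Qed.

Lemma mem_bots_rins B a : a \in bots (rins B a).
Proof.
elim: B => [|c B IH] /=; first by rewrite inE.
by case: ifP => _ /=; rewrite inE ?bottom_rcons ?eqxx ?IH ?orbT.
Qed.

Lemma mem_bots_rins_leq B a b : b \in bots B -> b <= a -> b \in bots (rins B a).
Proof.
elim: B => [|c B IH] //=; rewrite inE => bB ba.
case: ifP => ac /=; rewrite inE ?bottom_rcons; last first.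
  by case/orP: bB => [-> | /IH/(_ ba) ->]; rewrite ?orbT.
case/orP: bB => [/eqP bc | ->]; last by rewrite orbT.
by rewrite eqn_leq ba bc ac.
Qed.

Lemma rins_stack B a : sorted ltn (bots B) -> a \in bots B ->
  rins B a = [seq if bottom c == a then rcons c a else c | c <- B].
Proof.
elim: B => [|c B IH] //=; rewrite (path_sortedE ltn_trans) inE.
move=> /andP[cB sB]; case: (ltngtP a (bottom c)) => [ac | ca | ac] /= aB.
- by move/(allP cB): aB; rewrite ltnNge (ltnW ac).
- by rewrite IH.
- rewrite map_id_in // => c' /(map_f bottom) /(allP cB).
  by rewrite ac => /gtn_eqF ->.
Qed.

Lemma bots_stack B (k : column -> nat) :
  bots [seq c ++ nseq (k c) (bottom c) | c <- B] = bots B.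
Proof.
by rewrite /bots -map_comp; apply: eq_map => c /=; rewrite bottom_cat_nseq.
Qed.

Lemma foldl_rins_stack B u : sorted ltn (bots B) -> {subset u <= bots B} ->
  foldl rins B u = [seq c ++ nseq (count_mem (bottom c) u) (bottom c) | c <- B].
Proof.
move=> sB; elim/last_ind: u => [|u a IH] uB.
  by rewrite map_id_in // => c _; rewrite cats0.
have aB : a \in bots B by apply: uB; rewrite mem_rcons mem_head.
rewrite foldl_rcons IH => [| b bu]; last first.
  by apply: uB; rewrite mem_rcons inE bu orbT.
rewrite rins_stack ?bots_stack // -map_comp; apply: eq_map => c /=.
rewrite bottom_cat_nseq -[rcons u a]cats1 count_cat /= addn0.
case: (bottom c =P a) => [-> | /eqP ca].
  by rewrite eqxx -cats1 -catA nseqD.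
by rewrite eq_sym (negbTE ca) addn0.
Qed.

Lemma foldl_rins_perm B u v : sorted ltn (bots B) -> {subset u <= bots B} ->
  perm_eq u v -> foldl rins B u = foldl rins B v.
Proof.
move=> sB uB uv; have vB : {subset v <= bots B}.
  by move=> b; rewrite -(perm_mem uv); apply: uB.
by rewrite !foldl_rins_stack //; apply: eq_map => c; rewrite (permP uv).
Qed.

Definition covered (w : seq nat) (k : nat) (B : rps_tableau) : Prop :=
  {in w, forall b, b < k -> b \in bots B}.

Lemma covered_rins w k B a : sorted ltn (bots B) -> a \in w ->
  covered w k B -> covered w k (rins B a).
Proof.
move=> sB aw cov b bw bk; case: (leqP b a) => [ba | ab].
  exact: mem_bots_rins_leq (cov b bw bk) ba.
have aB : {subset [:: a] <= bots B}.
  by move=> _ /[1!inE] /eqP ->; apply: cov aw (ltn_trans ab bk).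
have /= -> := foldl_rins_stack sB aB.
by rewrite bots_stack; apply: cov.
Qed.

Lemma covered_foldl w k B u : sorted ltn (bots B) -> {subset u <= w} ->
  covered w k B -> covered w k (foldl rins B u).
Proof.
elim: u B => [|a u IH] B sB uw cov //=.
apply: IH => [|b bu|]; first exact: sorted_bots_rins.
  by apply: uw; rewrite inE bu orbT.
by apply: covered_rins cov => //; apply: uw; rewrite mem_head.
Qed.

Lemma covered_rins_self w k B : covered w k B -> covered w k.+1 (rins B k).
Proof.
move=> cov b bw; rewrite ltnS leq_eqVlt => /orP[/eqP -> | bk].
  exact: mem_bots_rins.
exact: mem_bots_rins_leq (cov b bw bk) (ltnW bk).
Qed.

Lemma covered_pass w k B : sorted ltn (bots B) ->
  covered w k B -> covered w k.+1 (foldl rins B w).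
Proof.
move=> sB cov; have [kw | kNw] := boolP (k \in w); last first.
  move=> b bw; rewrite ltnS leq_eqVlt => /orP[/eqP bk | bk].
    by move: kNw; rewrite -bk bw.
  exact: covered_foldl sB (fun _ => id) cov b bw bk.
have [u1 [u2 wE]] : exists u1 u2, w = u1 ++ k :: u2.
  by case/splitPr: kw => u1 u2; exists u1, u2.
have sub_w u : {subset u <= u1 ++ k :: u2} -> {subset u <= w} by rewrite wE.
rewrite {2}wE foldl_cat /=; apply: covered_foldl.
- exact/sorted_bots_rins/sorted_bots_foldl.
- by apply: sub_w => b bu2; rewrite mem_cat inE bu2 !orbT.
apply: covered_rins_self; apply: covered_foldl sB _ cov.
by apply: sub_w => b bu1; rewrite mem_cat bu1.
Qed.

Lemma wpowSr w j : wpow w j.+1 = wpow w j ++ w.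
Proof. by rewrite /wpow -flatten_rcons -cats1 -(nseqD j 1) addn1. Qed.

Lemma covered_wpow w j : 0 \notin w -> covered w j.+1 (Rr (wpow w j)).
Proof.
move=> w0; elim: j => [|j IH].
  by move=> b bw; rewrite ltnS leqn0 => /eqP b0; move: w0; rewrite -b0 bw.
by rewrite /Rr wpowSr foldl_cat; apply: covered_pass (sorted_bots_Rr _) IH.
Qed.

Theorem proposition4p7 (n : nat) (x y : seq nat) :
  word_over n x -> word_over n y ->
  rps_equiv (wpow (x ++ y) n.+1) (wpow (x ++ y) n ++ (y ++ x)).
Proof.
move=> xn yn.
have wn : word_over n (x ++ y) by rewrite /word_over all_cat; apply/andP.
have w0 : 0 \notin x ++ y by apply/negP => /(allP wn).
have wB : {subset x ++ y <= bots (Rr (wpow (x ++ y) n))}.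
  move=> b bw; apply: (covered_wpow (j := n) w0 bw).
  by rewrite ltnS; case/andP: (allP wn b bw).
rewrite /rps_equiv wpowSr {1 2}/Rr foldl_cat [RHS]foldl_cat.
by apply: foldl_rins_perm (sorted_bots_Rr _) wB _; rewrite perm_catC.
Qed.
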